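(* Consider a charging station with a finite set $\mathcal{V}$ of electric vehicles (EVs) over discrete time slots $t\in\{1,\dots,T\}$, with the per-EV data and the set $\mathcal{F}_c$ described in the context. Let $(\{\hat p_{d,t}\}_t,\{\check p_{d,t}\}_t)$ be the upper and lower aggregate power trajectories obtained from problem P1 (in particular they belong to $\mathcal{F}_c$, together with some individual trajectories $\hat p^c_{v,t},\hat e_{v,t},\check p^c_{v,t},\check e_{v,t}$ witnessing membership). Then for every aggregate EV charging power trajectory $\{p_{d,t}\}_{t}$ satisfying $\check p_{d,t}\le p_{d,t}\le \hat p_{d,t}$ for all $t$, there always exists a disaggregate, feasible charging strategy for the individual EVs, i.e. individual charging powers $p^c_{v,t}$ and energy levels $e_{v,t}$ such that: $p_{d,t}=\sum_{v\in\mathcal{V}}p^c_{v,t}$ for all $t$; $0\le p^c_{v,t}\le \bar p_v$ for all $v$ and $t\in[t_v^a,t_v^d]$; $e_{v,t+1}=e_{v,t}+\eta_c p^c_{v,t}\Delta t$ for all $v$ and $t\neq T$; $e_{v,t_v^a}=e_v^a$ and $e_{v,t_v^d}\ge e_v^d$ for all $v$; $\underline e_v\le e_{v,t}\le \bar e_v$ for all $v,t$; and $p^c_{v,t}=0$ for all $v$ and $t\notin[t_v^a,t_v^d]$.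
   Context: Each EV $v\in\mathcal{V}$ has arrival time slot $t_v^a$, departure time slot $t_v^d$, initial energy $e_v^a$ at $t_v^a$, required energy $e_v^d$ at departure, maximum charging power $\bar p_v\ge 0$, energy bounds $\underline e_v\le \bar e_v$; $\eta_c>0$ is the charging efficiency and $\Delta t>0$ the slot length. The set $\mathcal{F}_c$ consists of all trajectories $\{\hat p_{d,t},\check p_{d,t}\}_t$ for which there exist $\hat p^c_{v,t},\hat e_{v,t},\check p^c_{v,t},\check e_{v,t}$ with: $\hat p_{d,t}=\sum_{v}\hat p^c_{v,t}$; $0\le\hat p^c_{v,t}\le\bar p_v$ for $t\in[t_v^a,t_v^d]$; $\hat e_{v,t+1}=\hat e_{v,t}+\eta_c\hat p^c_{v,t}\Delta t$ for $t\ne T$; $\hat e_{v,t_v^a}=e_v^a$, $\hat e_{v,t_v^d}\ge e_v^d$; $\underline e_v\le\hat e_{v,t}\le\bar e_v$; the identical constraints for the checked quantities $\check p_{d,t},\check p^c_{v,t},\check e_{v,t}$; $\check p_{d,t}\le\hat p_{d,t}$ for all $t$; and $\hat p^c_{v,t}=\check p^c_{v,t}=0$ for $t\notin[t_v^a,t_v^d]$. Problem P1 maximizes the long-run time-average expected value $\lim_{T\to\infty}\frac1T\sum_{t=1}^T\mathbb{E}[(\pi^e_t+\pi^c_t\rho_t)(\hat p_{d,t}-\check p_{d,t})]$ over $\mathcal{F}_c$, where $\pi^e_t$ is the electricity price, $\pi^c_t$ the carbon price and $\rho_t$ the grid carbon intensity at time $t$. *)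

From HB Require Import structures.
From mathcomp Require Import all_boot all_order all_algebra.
Set Implicit Arguments. Unset Strict Implicit. Unset Printing Implicit Defensive.
Import Order.TTheory GRing.Theory Num.Theory.
Local Open Scope ring_scope.

(* Per-EV data of the charging station. Time slots are natural numbers 1..T. *)
Record EVdata (R : realFieldType) (V : finType) := {
  t_arr : V -> nat;
  t_dep : V -> nat;
  e_arr : V -> R;
  e_dep : V -> R;
  p_max : V -> R;
  e_min : V -> R;
  e_max : V -> R
}.

Definition EVdata_ok (R : realFieldType) (V : finType) (T : nat)
    (D : EVdata R V) (eta_c dt : R) : Prop :=
  0 < eta_c /\ 0 < dt /\
  (forall v, 0 <= p_max D v) /\
  (forall v, e_min D v <= e_max D v) /\
  (forall v, (1 <= t_arr D v)%N /\ (t_arr D v <= t_dep D v)%N /\ (t_dep D v <= T)%N).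

Definition disagg_feasible (R : realFieldType) (V : finType) (T : nat)
    (D : EVdata R V) (eta_c dt : R)
    (P : nat -> R) (pc e : V -> nat -> R) : Prop :=
  (forall t, (1 <= t <= T)%N -> P t = \sum_(v : V) pc v t) /\
  (forall v t, (1 <= t <= T)%N -> (t_arr D v <= t <= t_dep D v)%N ->
      0 <= pc v t /\ pc v t <= p_max D v) /\
  (forall v t, (1 <= t)%N -> (t < T)%N ->
      e v t.+1 = e v t + eta_c * pc v t * dt) /\
  (forall v, e v (t_arr D v) = e_arr D v) /\
  (forall v, e_dep D v <= e v (t_dep D v)) /\
  (forall v t, (1 <= t <= T)%N -> e_min D v <= e v t /\ e v t <= e_max D v) /\
  (forall v t, (1 <= t <= T)%N -> ~~ (t_arr D v <= t <= t_dep D v)%N ->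
      pc v t = 0).

Definition in_Fc (R : realFieldType) (V : finType) (T : nat)
    (D : EVdata R V) (eta_c dt : R) (phat pcheck : nat -> R) : Prop :=
  (exists hpc he, disagg_feasible T D eta_c dt phat hpc he) /\
  (exists cpc ce, disagg_feasible T D eta_c dt pcheck cpc ce) /\
  (forall t, (1 <= t <= T)%N -> pcheck t <= phat t).

From HB Require Import structures.
From mathcomp Require Import all_boot all_order all_algebra.
From mathcomp Require Import ring lra.
Import Order.TTheory GRing.Theory Num.Theory.
Set Implicit Arguments. Unset Strict Implicit. Unset Printing Implicit Defensive.
Local Open Scope ring_scope.

(* Write the sought powers as [cpc + w], where [cpc] is the lower disaggregation.
   Since powers are nonnegative, energies are nondecreasing after arrival, so
   every energy constraint holds as soon as the energy at departure and at the
   horizon T lie between those of the two given disaggregations.  Hence [w] must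
   split the extra power [p - pcheck] of each slot among the EVs, staying between
   0 and [hpc - cpc] on each charge, on each prefix up to a departure and on each
   prefix up to the horizon.  These are the constraints of a sub-flow, with
   prescribed values on the edges leaving the source, of the flow [hpc - cpc] in
   a network whose nodes are the slots and the two energy checkpoints of each EV.
   Such a sub-flow always exists: reverse the negative edges, then bypass the
   intermediate nodes one at a time, splitting the flow through a node
   proportionally among its entering and leaving edges, until only loops at the
   source remain. *)

Definition between (R : numDomainType) (a b x : R) : Prop :=
  a <= x <= b \/ b <= x <= a.

Lemma between_ge (R : numDomainType) (lo a b x : R) :
  lo <= a -> lo <= b -> between a b x -> lo <= x.
Proof.
by move=> la lb [/andP[ax _]|/andP[bx _]]; [exact: le_trans ax | exact: le_trans bx].
Qed.

Lemma between_le (R : numDomainType) (hi a b x : R) :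
  a <= hi -> b <= hi -> between a b x -> x <= hi.
Proof.
by move=> ah bh [/andP[_ xb]|/andP[_ xa]]; [exact: le_trans bh | exact: le_trans ah].
Qed.

Lemma between_addl (R : realDomainType) (a b x : R) :
  between 0 (b - a) x -> between a b (a + x).
Proof. by case=> /andP[? ?]; [left | right]; apply/andP; split; lra. Qed.

Lemma between_affine (R : numDomainType) (c k a b x : R) :
  0 <= k -> between a b x -> between (c + k * a) (c + k * b) (c + k * x).
Proof.
by move=> k0 [/andP[h1 h2]|/andP[h1 h2]]; [left | right]; rewrite !lerD2l !ler_wpM2l.
Qed.

Lemma sum_indicator (R : pzSemiRingType) (I : finType) (P : pred I) (g : I -> R) :
  \sum_i (P i)%:R * g i = \sum_(i | P i) g i.
Proof.
by rewrite [RHS]big_mkcond; apply: eq_bigr => i _; case: (P i); rewrite ?mul1r ?mul0r.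
Qed.

Lemma sum_pair_cond (R : nmodType) (I J : finType) (P : pred (I * J)) (F : I * J -> R) :
  \sum_(p | P p) F p = \sum_i \sum_(j | P (i, j)) F (i, j).
Proof. by rewrite pair_big_dep; apply: eq_big => -[]. Qed.

(** * Sub-flows *)

Section Flows.
Variables (R : realFieldType) (N : finType).

Definition net_inflow (E : finType) (tl hd : E -> N) (g : E -> R) (y : N) : R :=
  \sum_e ((hd e == y)%:R - (tl e == y)%:R) * g e.

Lemma net_inflowE (E : finType) (tl hd : E -> N) (g : E -> R) y :
  net_inflow tl hd g y = \sum_(e | hd e == y) g e - \sum_(e | tl e == y) g e.
Proof.
rewrite -(sum_indicator (fun e => hd e == y)) -(sum_indicator (fun e => tl e == y)).
by rewrite -sumrB; apply: eq_bigr => e _; rewrite mulrBl.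
Qed.

Lemma net_inflow_loops (E : finType) (tl hd : E -> N) (g1 g2 : E -> R) :
  (forall e, tl e != hd e -> g1 e = g2 e) ->
  net_inflow tl hd g1 =1 net_inflow tl hd g2.
Proof.
move=> g12 y; apply: eq_bigr => e _.
by have [->|/g12->] := eqVneq (tl e) (hd e); rewrite ?subrr ?mul0r.
Qed.

Lemma net_inflow_reverse (E : finType) (tl hd : E -> N) (rev : pred E) (g : E -> R) :
  net_inflow (fun e => if rev e then hd e else tl e)
             (fun e => if rev e then tl e else hd e)
             (fun e => if rev e then - g e else g e) =1 net_inflow tl hd g.
Proof. by move=> y; apply: eq_bigr => e _; case: (rev e) => //; ring. Qed.

Variable s : N.

Definition conservative (E : finType) (tl hd : E -> N) (g : E -> R) : Prop :=
  forall y, y != s -> net_inflow tl hd g y = 0.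

Definition source_demand (E : finType) (tl : E -> N) (f d : E -> R) : Prop :=
  forall e, tl e = s -> 0 <= d e <= f e.

Definition subflow (E : finType) (tl hd : E -> N) (f d W : E -> R) : Prop :=
  [/\ forall e, 0 <= W e <= f e, forall e, tl e = s -> W e = d e
    & conservative tl hd W].

Definition supported (E : finType) (tl hd : E -> N) (A : {set N}) (g : E -> R) :=
  forall e, g e != 0 -> (tl e \in s |: A) && (hd e \in s |: A).

Lemma subflow_source_loops (E : finType) (tl hd : E -> N) (f d : E -> R) :
  (forall e, 0 <= f e) -> source_demand tl f d -> supported tl hd set0 f ->
  exists W, subflow tl hd f d W.
Proof.
move=> f_ge0 dem supp; exists (fun e => if tl e == s then d e else 0); split.
- by move=> e; case: eqP => [/dem //|_]; rewrite lexx f_ge0.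
- by move=> e ->; rewrite eqxx.
move=> y ys; apply: big1 => e _.
have [tl_s|] := eqVneq (tl e) s; last by rewrite mulr0.
have [->|dnz] := eqVneq (d e) 0; first by rewrite mulr0.
have /supp : f e != 0.
  have /andP[d_ge0 d_le] := dem e tl_s.
  by apply: contra dnz => /eqP fe0; rewrite eq_le d_ge0 andbT -fe0.
by rewrite setU0 !inE tl_s => /andP[_ /eqP->]; rewrite subrr mul0r.
Qed.

Section Elimination.
Variables (E : finType) (tl hd : E -> N) (f : E -> R) (x : N).
Hypotheses (x_neq_s : x != s) (f_ge0 : forall e, 0 <= f e)
  (f_cons : conservative tl hd f).

Definition entering e := (hd e == x) && (tl e != x).
Definition leaving e := (tl e == x) && (hd e != x).
Definition touching e := (tl e == x) || (hd e == x).
Definition through_flow := \sum_(e | entering e) f e.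

Local Notation bypass_edge := (E + E * E)%type.

Definition bypass_tl (b : bypass_edge) : N :=
  match b with inl e => tl e | inr (i, _) => tl i end.
Definition bypass_hd (b : bypass_edge) : N :=
  match b with inl e => hd e | inr (_, o) => hd o end.

(* Bypassing [x]: every pair of an edge [i] entering [x] and an edge [o] leaving
   it becomes a direct edge carrying the share [f i * f o / through_flow] of the
   flow through [x], and the edges touching [x] are dropped.  [contract] carries
   a flow on the bypass graph back to the original edges. *)
Definition expand (g : E -> R) (b : bypass_edge) : R :=
  match b with
  | inl e => if touching e then 0 else g e
  | inr (i, o) => if entering i && leaving o then g i * f o / through_flow else 0
  end.

Definition contract (g : bypass_edge -> R) (e : E) : R :=
  g (inl e) + \sum_o g (inr (e, o)) + \sum_i g (inr (i, e)).

Definition on_bypass (g : bypass_edge -> R) : Prop :=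
  (forall e, touching e -> g (inl e) = 0) /\
  (forall i o, ~~ (entering i && leaving o) -> g (inr (i, o)) = 0).

Lemma leaving_flow : \sum_(e | leaving e) f e = through_flow.
Proof.
apply/eqP; rewrite eq_sym -subr_eq0 /through_flow.
rewrite -(sum_indicator entering) -(sum_indicator leaving) -sumrB.
apply/eqP; rewrite -[RHS](f_cons x_neq_s); apply: eq_bigr => e _.
rewrite -mulrBl /entering /leaving.
by case: (hd e == x); case: (tl e == x); rewrite /= ?subrr ?subr0 ?sub0r.
Qed.

Lemma through_flow_eq0 e : through_flow = 0 -> entering e || leaving e -> f e = 0.
Proof.
move=> F0 /orP[ein|eout]; apply/le_anti; rewrite f_ge0 andbT -F0.
  by rewrite /through_flow (bigD1 e) //= lerDl sumr_ge0.
by rewrite -leaving_flow (bigD1 e) //= lerDl sumr_ge0.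
Qed.

Lemma expand_on_bypass g : on_bypass (expand g).
Proof. by split=> [e /= ->|i o /= /negbTE->]. Qed.

Lemma net_inflow_contract g : on_bypass g ->
  net_inflow bypass_tl bypass_hd g =1 net_inflow tl hd (contract g).
Proof.
move=> [_ g_inr] y; rewrite /net_inflow big_sumType /=.
under [RHS]eq_bigr do rewrite /contract !mulrDr !mulr_sumr.
rewrite !big_split /= -addrA; congr (_ + _).
rewrite [X in _ + X]exchange_big -big_split /=.
under [RHS]eq_bigr do rewrite -big_split /=.
rewrite [RHS]pair_bigA /=.
apply: eq_bigr => -[i o] _ /=.
have [/andP[/andP[/eqP hi _] /andP[/eqP to _]]|/g_inr->] := boolP (entering i && leaving o).
  by rewrite hi to; ring.
by rewrite !mulr0 addr0.
Qed.

Lemma contract_expand_away g e : ~~ touching e -> contract (expand g) e = g e.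
Proof.
move=> away; have /norP[tlx hdx] := away; rewrite /contract /= (negbTE away).
rewrite big1 => [|o _]; last by rewrite /entering (negbTE hdx).
by rewrite big1 => [|i _]; rewrite ?addr0 // /leaving (negbTE tlx) andbF.
Qed.

Lemma contract_expand_entering g e : entering e ->
  contract (expand g) e = g e * through_flow / through_flow.
Proof.
move=> ein; have /andP[hdx tlx] := ein.
rewrite /contract /= /touching hdx orbT add0r ein.
rewrite [X in _ + X]big1 => [|i _]; last by rewrite /leaving (negbTE tlx) andbF.
by rewrite addr0 -big_mkcond /= -mulr_suml -mulr_sumr leaving_flow.
Qed.

Lemma contract_expand_leaving g e : leaving e ->
  contract (expand g) e = (\sum_(i | entering i) g i) * f e / through_flow.
Proof.
move=> eout; have /andP[tlx hdx] := eout.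
rewrite /contract /= /touching tlx add0r.
rewrite big1 => [|o _]; last by rewrite /entering (negbTE hdx).
rewrite add0r (eq_bigr (fun i => if entering i then g i * f e / through_flow else 0)).
  by rewrite -big_mkcond /= -!mulr_suml.
by move=> i _; rewrite eout andbT.
Qed.

Lemma contract_expand_loop g e : tl e = x -> hd e = x -> contract (expand g) e = 0.
Proof.
move=> tlx hdx; rewrite /contract /= /touching tlx eqxx add0r.
rewrite big1 => [|o _]; last by rewrite /entering tlx eqxx !andbF.
by rewrite [X in _ + X]big1 => [|i _]; rewrite ?addr0 // /leaving hdx eqxx !andbF.
Qed.

Lemma through_flow_ge0 : 0 <= through_flow.
Proof. exact: sumr_ge0. Qed.

Lemma mul_through_flowK a : (through_flow = 0 -> a = 0) ->
  a * through_flow / through_flow = a.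
Proof.
have [F0 /(_ F0)->|Fn0 _] := eqVneq through_flow 0; first by rewrite !mul0r.
by rewrite mulfK.
Qed.

Lemma contract_expand_f e :
  contract (expand f) e = if (tl e == x) && (hd e == x) then 0 else f e.
Proof.
case tlx: (tl e == x); case hdx: (hd e == x) => /=.
- by rewrite contract_expand_loop //; apply/eqP.
- have eout : leaving e by rewrite /leaving tlx hdx.
  rewrite contract_expand_leaving // -/through_flow [through_flow * _]mulrC.
  by rewrite mul_through_flowK // => F0; apply: through_flow_eq0; rewrite ?eout ?orbT.
- have ein : entering e by rewrite /entering tlx hdx.
  rewrite contract_expand_entering // mul_through_flowK // => F0.
  by apply: through_flow_eq0; rewrite ?ein.
- by rewrite contract_expand_away // /touching tlx hdx.
Qed.

Lemma contract_expand_le e : contract (expand f) e <= f e.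
Proof. by rewrite contract_expand_f; case: ifP. Qed.

Lemma contract_expand_demand d e :
  source_demand tl f d -> tl e = s -> contract (expand d) e = d e.
Proof.
move=> dem tls; have tlx : tl e != x by rewrite tls eq_sym.
have [hdx|hdx] := eqVneq (hd e) x.
  2: by rewrite contract_expand_away // /touching (negbTE tlx) hdx.
have ein : entering e by rewrite /entering hdx eqxx.
rewrite contract_expand_entering // mul_through_flowK // => F0.
have /andP[d_ge0 d_le] := dem e tls.
have fe0 : f e = 0 by apply: through_flow_eq0; rewrite ?ein.
by apply/le_anti; rewrite d_ge0 andbT -fe0.
Qed.

Lemma contract_le (g1 g2 : bypass_edge -> R) e :
  (forall b, g1 b <= g2 b) -> contract g1 e <= contract g2 e.
Proof. by move=> g12; rewrite !lerD ?ler_sum. Qed.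

Lemma expand_ge0 b : 0 <= expand f b.
Proof.
case: b => [e|[i o]] /=; case: ifP => // _.
by rewrite divr_ge0 ?mulr_ge0 ?through_flow_ge0.
Qed.

Lemma expand_conservative : conservative bypass_tl bypass_hd (expand f).
Proof.
move=> y ys; rewrite (net_inflow_contract (expand_on_bypass f)) -[RHS](f_cons ys).
apply: net_inflow_loops => e; rewrite contract_expand_f.
by case: ifP => // /andP[/eqP-> /eqP->]; rewrite eqxx.
Qed.

Lemma expand_demand d :
  source_demand tl f d -> source_demand bypass_tl (expand f) (expand d).
Proof.
move=> dem [e|[i o]] /= tls; case: ifP => _; rewrite ?lexx //; first exact: dem.
have /andP[d_ge0 d_le] := dem i tls.
have fo_ge0 : 0 <= f o / through_flow by rewrite divr_ge0 ?through_flow_ge0.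
by rewrite -!mulrA mulr_ge0 ?ler_wpM2r.
Qed.

Lemma expand_supported A :
  supported tl hd A f -> supported bypass_tl bypass_hd (A :\ x) (expand f).
Proof.
have keep y : y \in s |: A -> y != x -> y \in s |: A :\ x.
  by rewrite !inE => /orP[->//|yA] ->; rewrite yA orbT.
move=> supp [e|[i o]] /=.
  case: ifP => [|/norP[tlx hdx]]; first by rewrite eqxx.
  by move=> /supp /andP[tlA hdA]; rewrite !keep.
case: ifP => [/andP[/andP[_ tlx] /andP[_ hdx]]|]; last by rewrite eqxx.
rewrite !mulf_eq0 invr_eq0 => /norP[/norP[/supp /andP[tlA _] /supp /andP[_ hdA]] _].
by rewrite !keep.
Qed.

Lemma contract_subflow d W : source_demand tl f d ->
  subflow bypass_tl bypass_hd (expand f) (expand d) W -> subflow tl hd f d (contract W).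
Proof.
move=> dem [W_bd W_d W_cons].
have W0 b : expand f b = 0 -> W b = 0.
  by move=> fb0; have := W_bd b; rewrite fb0 => /andP[h1 h2]; apply/le_anti; rewrite h1 h2.
have W_on : on_bypass W.
  have [f_inl f_inr] := expand_on_bypass f.
  by split=> [e /f_inl | i o /f_inr] /W0.
have W_ge0 b : 0 <= W b by case/andP: (W_bd b).
split.
- move=> e; apply/andP; split.
    by rewrite !addr_ge0 ?W_ge0 ?sumr_ge0 // => b _; apply: W_ge0.
  apply: le_trans (contract_expand_le e); apply: contract_le => b.
  by case/andP: (W_bd b).
- move=> e tls; rewrite -(contract_expand_demand dem tls) /contract W_d //.
  congr (_ + _ + _); first by apply: eq_bigr => o _; apply: W_d.
  apply: eq_bigr => i _.
  have not_out : ~~ (entering i && leaving e).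
    by rewrite /leaving tls eq_sym (negbTE x_neq_s) andbF.
  by rewrite W_on.2 ?(expand_on_bypass d).2.
- by move=> y ys; rewrite -net_inflow_contract ?W_cons.
Qed.

End Elimination.

Lemma subflow_exists_supported n (E : finType) (tl hd : E -> N) (f d : E -> R)
    (A : {set N}) :
  s \notin A -> (#|A| <= n)%N -> (forall e, 0 <= f e) -> conservative tl hd f ->
  source_demand tl f d -> supported tl hd A f -> exists W, subflow tl hd f d W.
Proof.
elim: n E tl hd f d A => [|n IHn] E tl hd f d A sA An f_ge0 f_cons dem supp.
  by move: An supp; rewrite leqn0 cards_eq0 => /eqP->; apply: subflow_source_loops.
have [A0|[x xA]] := set_0Vmem A; first by rewrite A0 in supp; apply: subflow_source_loops.
have xs : x != s by apply: contraNneq sA => <-.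
have [W sub] : exists W, subflow (bypass_tl tl) (bypass_hd hd)
    (expand tl hd f x f) (expand tl hd f x d) W.
  apply: (IHn _ _ _ _ _ (A :\ x)).
  - by rewrite !inE negb_and sA orbT.
  - by move: An; rewrite (cardsD1 x) xA.
  - exact: expand_ge0.
  - exact: expand_conservative.
  - exact: expand_demand.
  - exact: expand_supported.
by exists (contract W); apply: (contract_subflow xs).
Qed.

Lemma subflow_exists (E : finType) (tl hd : E -> N) (f d : E -> R) :
  (forall e, 0 <= f e) -> conservative tl hd f -> source_demand tl f d ->
  exists W, subflow tl hd f d W.
Proof.
move=> f_ge0 f_cons dem.
apply: (@subflow_exists_supported #|[set~ s]| _ _ _ _ _ [set~ s]) => //.
  by rewrite !inE eqxx.
by move=> e _; rewrite !inE; case: (tl e == s); case: (hd e == s).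
Qed.

Lemma signed_subflow_exists (E : finType) (tl hd : E -> N) (f d : E -> R) :
  conservative tl hd f -> source_demand tl f d ->
  exists W : E -> R, [/\ forall e, between 0 (f e) (W e),
    forall e, tl e = s -> W e = d e & conservative tl hd W].
Proof.
move=> f_cons dem; pose rev e := f e < 0.
pose tl' e := if rev e then hd e else tl e.
pose hd' e := if rev e then tl e else hd e.
pose f' e := if rev e then - f e else f e.
have [|||W [W_bd W_d W_cons]] :=
  @subflow_exists _ tl' hd' f' (fun e => if rev e then 0 else d e).
- by move=> e; rewrite /f'; case: ifP => [/ltW|/negbT]; rewrite ?oppr_ge0 // -leNgt.
- by move=> y /f_cons <-; apply: net_inflow_reverse.
- move=> e; rewrite /tl' /f'; case: ifP => [rev_e _|_ /dem //].
  by rewrite lexx oppr_ge0 ltW.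
exists (fun e => if rev e then - W e else W e); split.
- move=> e; have /andP[] := W_bd e; rewrite /between /f'.
  case: ifP => _ W_ge0 W_le; [right | left]; last by rewrite W_ge0 W_le.
  by rewrite lerNr W_le oppr_le0 W_ge0.
- move=> e tls; have /andP[d_ge0 d_le] := dem e tls.
  have rev_e : rev e = false by rewrite /rev ltNge (le_trans d_ge0 d_le).
  by rewrite rev_e W_d // /tl' rev_e.
- move=> y ys; rewrite -(net_inflow_reverse tl hd rev) -(W_cons y ys).
  by apply: eq_bigr => e _; rewrite /tl' /hd'; case: (rev e); rewrite ?opprK.
Qed.

End Flows.

(** * The charging network *)

Section Splitting.
Variables (R : realFieldType) (V : finType) (T : nat) (td : V -> nat).
Hypothesis td_le_T : forall v, (td v <= T)%N.

Local Notation node := (option ('I_T + (V + V))).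
Local Notation edge := ((V * 'I_T) + ('I_T + (V + V)))%type.

(* Nodes: [None] is the source, [Some (inl j)] is slot [j.+1], and
   [Some (inr (inl v))], [Some (inr (inr v))] are the departure and horizon
   checkpoints of [v].  Edges: [inl (v, j)] is the charging of [v] in slot
   [j.+1], from the slot to the first checkpoint after it (the source if there
   is none); [inr (inl j)] goes from the source to slot [j.+1]; [inr (inr (inl v))]
   from the departure to the horizon checkpoint of [v]; [inr (inr (inr v))] from
   the horizon checkpoint of [v] back to the source. *)
Definition charge_route v (j : 'I_T) : node :=
  if (j.+1 < td v)%N then Some (inr (inl v))
  else if (j.+1 < T)%N then Some (inr (inr v)) else None.

Definition edge_tail (e : edge) : node :=
  match e with
  | inl (_, j) => Some (inl j)
  | inr (inl _) => None
  | inr (inr (inl v)) => Some (inr (inl v))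
  | inr (inr (inr v)) => Some (inr (inr v))
  end.

Definition edge_head (e : edge) : node :=
  match e with
  | inl (v, j) => charge_route v j
  | inr (inl j) => Some (inl j)
  | inr (inr (inl v)) => Some (inr (inr v))
  | inr (inr (inr _)) => None
  end.

Lemma charge_route_slot v j i : (charge_route v j == Some (inl i)) = false.
Proof. by rewrite /charge_route; case: ifP => _ //; case: ifP. Qed.

Lemma charge_route_departure v j w :
  (charge_route v j == Some (inr (inl w))) = (v == w) && (j.+1 < td v)%N.
Proof.
by rewrite /charge_route; case: ifP => [|_]; [rewrite andbT | case: ifP; rewrite andbF].
Qed.

Lemma charge_route_horizon v j w :
  (charge_route v j == Some (inr (inr w))) = (v == w) && (td v <= j.+1 < T)%N.
Proof.
rewrite /charge_route; case: ltnP => _ /=; first by rewrite andbF.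
by case: ifP => _; rewrite ?andbT ?andbF.
Qed.

Lemma net_inflow_slot (g : edge -> R) j :
  net_inflow edge_tail edge_head g (Some (inl j)) = g (inr (inl j)) - \sum_v g (inl (v, j)).
Proof.
rewrite net_inflowE !big_sumType /= !big_pred0_eq !addr0.
rewrite big_pred0 ?add0r => [|[v i]]; last exact: charge_route_slot.
rewrite (big_pred1 j) // sum_pair_cond; congr (_ - _).
by apply: eq_bigr => v _; rewrite (big_pred1 j).
Qed.

Lemma net_inflow_departure (g : edge -> R) w :
  net_inflow edge_tail edge_head g (Some (inr (inl w))) =
    \sum_(j < T | (j.+1 < td w)%N) g (inl (w, j)) - g (inr (inr (inl w))).
Proof.
rewrite net_inflowE !big_sumType /= !big_pred0_eq !addr0 !add0r (big_pred1 w) //.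
rewrite [X in _ - (X + _)]big_pred0 ?add0r => [|[]//].
rewrite sum_pair_cond (bigD1 w) //= [X in _ + X - _]big1 ?addr0 => [|v vw]; last first.
  by rewrite big_pred0 // => j; rewrite charge_route_departure (negbTE vw).
by congr (_ - _); apply: eq_bigl => j; rewrite charge_route_departure eqxx.
Qed.

Lemma net_inflow_horizon (g : edge -> R) w :
  net_inflow edge_tail edge_head g (Some (inr (inr w))) =
    g (inr (inr (inl w))) + \sum_(j < T | (td w <= j.+1 < T)%N) g (inl (w, j))
    - g (inr (inr (inr w))).
Proof.
rewrite net_inflowE !big_sumType /= !big_pred0_eq !addr0 !add0r !(big_pred1 w) //.
rewrite [X in _ - (X + _)]big_pred0 ?add0r => [|[]//].
rewrite sum_pair_cond (bigD1 w) //= [X in _ + X + _ - _]big1 ?addr0 => [|v vw]; last first.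
  by rewrite big_pred0 // => j; rewrite charge_route_horizon (negbTE vw).
rewrite [_ + g _]addrC; congr (_ + _ - _).
by apply: eq_bigl => j; rewrite charge_route_horizon eqxx.
Qed.

Definition profile_flow (q : V -> nat -> R) (e : edge) : R :=
  match e with
  | inl (v, j) => q v j.+1
  | inr (inl j) => \sum_v q v j.+1
  | inr (inr (inl v)) => \sum_(j < T | (j.+1 < td v)%N) q v j.+1
  | inr (inr (inr v)) => \sum_(j < T | (j.+1 < T)%N) q v j.+1
  end.

Lemma sum_before_horizon v (F : 'I_T -> R) :
  \sum_(j < T | (j.+1 < T)%N) F j =
  \sum_(j < T | (j.+1 < td v)%N) F j + \sum_(j < T | (td v <= j.+1 < T)%N) F j.
Proof.
rewrite (bigID (fun j : 'I_T => (j.+1 < td v)%N)) /=; congr (_ + _); apply: eq_bigl => j.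
  by apply/idP/idP => [/andP[]//|lt]; rewrite lt (leq_trans lt (td_le_T v)).
by rewrite -leqNgt andbC.
Qed.

Lemma profile_flow_conservative q : conservative None edge_tail edge_head (profile_flow q).
Proof.
case=> [[j|[v|v]]|] // _.
- by rewrite net_inflow_slot subrr.
- by rewrite net_inflow_departure subrr.
- by rewrite net_inflow_horizon /= -sum_before_horizon subrr.
Qed.

Lemma sum_slots (F : nat -> R) n : (n <= T.+1)%N ->
  \sum_(j < T | (j.+1 < n)%N) F j.+1 = \sum_(1 <= t < n) F t.
Proof.
move=> nT; have nT' : (n.-1 <= T)%N by case: n nT.
rewrite big_add1 (big_nat_widen _ _ _ _ _ nT') big_mkord.
by apply: eq_bigl => j; rewrite ltn_predRL.
Qed.

Lemma slot_of t : (1 <= t <= T)%N -> exists j : 'I_T, t = j.+1.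
Proof.
case: t => [//|t] /andP[_ tT].
by exists (Ordinal tT).
Qed.

Lemma balanced_split (q : V -> nat -> R) (a : nat -> R) :
  (forall t, (1 <= t <= T)%N -> 0 <= a t <= \sum_v q v t) ->
  exists w : V -> nat -> R,
    [/\ forall t, (1 <= t <= T)%N -> \sum_v w v t = a t,
        forall v t, (1 <= t <= T)%N -> between 0 (q v t) (w v t),
        forall v, between 0 (\sum_(1 <= t < td v) q v t) (\sum_(1 <= t < td v) w v t)
      & forall v, between 0 (\sum_(1 <= t < T) q v t) (\sum_(1 <= t < T) w v t)].
Proof.
move=> a_bd; pose d (e : edge) := if e is inr (inl j) then a j.+1 else 0.
have [|W [W_bd W_d W_cons]] := signed_subflow_exists (profile_flow_conservative q) (d := d).
  by case=> [[v j]|[j|[v|v]]] //= _; apply: a_bd; rewrite /= ltn_ord.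
pose w v t := \sum_(j < T | j.+1 == t) W (inl (v, j)).
have wE v (j : 'I_T) : w v j.+1 = W (inl (v, j)).
  by rewrite /w (big_pred1 j) // => i; rewrite /= eqSS.
have sum_w v n : (n <= T.+1)%N ->
    \sum_(1 <= t < n) w v t = \sum_(j < T | (j.+1 < n)%N) W (inl (v, j)).
  by move=> nT; rewrite -sum_slots //; apply: eq_bigr => j _; rewrite wE.
have W_departure v : \sum_(j < T | (j.+1 < td v)%N) W (inl (v, j)) = W (inr (inr (inl v))).
  by apply/eqP; rewrite -subr_eq0 -net_inflow_departure W_cons.
have W_horizon v : \sum_(j < T | (j.+1 < T)%N) W (inl (v, j)) = W (inr (inr (inr v))).
  apply/eqP; rewrite -subr_eq0 (sum_before_horizon v) W_departure.
  by rewrite -net_inflow_horizon W_cons.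
exists w; split.
- move=> t /slot_of[j ->]; under eq_bigr do rewrite wE.
  apply/eqP; rewrite -[a _]/(d (inr (inl j))) -(W_d (inr (inl j))) //.
  by rewrite eq_sym -subr_eq0 -net_inflow_slot W_cons.
- by move=> v t /slot_of[j ->]; rewrite wE; apply: (W_bd (inl (v, j))).
- have tdT v : (td v <= T.+1)%N by rewrite leqW ?td_le_T.
  move=> v; rewrite (sum_w _ _ (tdT v)) -(sum_slots _ (tdT v)) W_departure.
  exact: (W_bd (inr (inr (inl v)))).
- move=> v; rewrite sum_w // -sum_slots // W_horizon.
  exact: (W_bd (inr (inr (inr v)))).
Qed.

End Splitting.

(** * Mixing the two disaggregations *)

Lemma cumulative_energy (R : pzRingType) (T ta : nat) (k ea : R) (q e : nat -> R) :
  (1 <= ta <= T)%N -> (forall t, (1 <= t < ta)%N -> q t = 0) ->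
  (forall t, (1 <= t < T)%N -> e t.+1 = e t + k * q t) -> e ta = ea ->
  forall t, (1 <= t <= T)%N -> e t = ea + k * \sum_(1 <= j < t) q j.
Proof.
move=> /andP[ta1 taT] q0 step e_ta.
have from1 t : (1 <= t <= T)%N -> e t = e 1 + k * \sum_(1 <= j < t) q j.
  elim: t => [//|[|t] IH] /andP[_ tT]; first by rewrite big_geq ?mulr0 ?addr0.
  by rewrite step // IH ?(ltnW tT) // [in RHS]big_nat_recr //= mulrDr addrA.
have sum0 : \sum_(1 <= j < ta) q j = 0.
  by rewrite big_nat_cond big1 // => j /andP[/q0 -> _].
by move=> t tr; rewrite from1 // -e_ta (from1 ta) ?ta1 // sum0 mulr0 addr0.
Qed.

Lemma disagg_energyE (R : realFieldType) (V : finType) (T : nat) (D : EVdata R V)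
    (eta_c dt : R) (P : nat -> R) (pc e : V -> nat -> R) :
  EVdata_ok T D eta_c dt -> disagg_feasible T D eta_c dt P pc e ->
  forall v t, (1 <= t <= T)%N -> e v t = e_arr D v + eta_c * dt * \sum_(1 <= j < t) pc v j.
Proof.
move=> [_ [_ [_ [_ win]]]] [_ [_ [step [arr [_ [_ off]]]]]] v.
have [ta1 [tatd tdT]] := win v; have taT := leq_trans tatd tdT.
apply: cumulative_energy (arr v); first by rewrite ta1.
  move=> t /andP[t1 tta]; apply: off; last by rewrite negb_and -ltnNge tta.
  by rewrite t1 (leq_trans (ltnW tta)).
by move=> t /andP[t1 tT]; rewrite step // mulrAC.
Qed.

Section Mixing.
Variables (R : realFieldType) (V : finType) (T : nat) (D : EVdata R V) (eta_c dt : R).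
Variables (Phat Pcheck p : nat -> R) (hpc he cpc ce w : V -> nat -> R).
Hypotheses (ok : EVdata_ok T D eta_c dt)
  (hat : disagg_feasible T D eta_c dt Phat hpc he)
  (check : disagg_feasible T D eta_c dt Pcheck cpc ce).
Hypothesis w_sum : forall t, (1 <= t <= T)%N -> \sum_v w v t = p t - Pcheck t.
Hypothesis w_slot : forall v t, (1 <= t <= T)%N ->
  between 0 (hpc v t - cpc v t) (w v t).
Hypothesis w_departure : forall v,
  between 0 (\sum_(1 <= t < t_dep D v) (hpc v t - cpc v t))
            (\sum_(1 <= t < t_dep D v) w v t).
Hypothesis w_horizon : forall v,
  between 0 (\sum_(1 <= t < T) (hpc v t - cpc v t)) (\sum_(1 <= t < T) w v t).

Let rate_ge0 : 0 <= eta_c * dt.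
Proof. by have [? [? _]] := ok; rewrite mulr_ge0 ?ltW. Qed.

Definition mixed_power v t := cpc v t + w v t.
Definition mixed_energy v t := e_arr D v + eta_c * dt * \sum_(1 <= j < t) mixed_power v j.

Lemma mixed_power_between v t : (1 <= t <= T)%N ->
  between (cpc v t) (hpc v t) (mixed_power v t).
Proof. by move=> tr; apply: between_addl; apply: w_slot. Qed.

Lemma mixed_power_off v t : (1 <= t <= T)%N ->
  ~~ (t_arr D v <= t <= t_dep D v)%N -> mixed_power v t = 0.
Proof.
move=> tr off; have [_ [_ [_ [_ [_ [_ h0]]]]]] := hat.
have [_ [_ [_ [_ [_ [_ c0]]]]]] := check.
have := mixed_power_between v tr; rewrite h0 // c0 // => w0.
by apply/le_anti; rewrite (between_ge _ _ w0) ?(between_le _ _ w0).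
Qed.

Lemma mixed_power_ge0 v t : (1 <= t <= T)%N -> 0 <= mixed_power v t.
Proof.
move=> tr; have [win|off] := boolP (t_arr D v <= t <= t_dep D v)%N.
  2: by rewrite mixed_power_off.
have [_ [hbd _]] := hat; have [_ [cbd _]] := check.
by apply: (between_ge _ _ (mixed_power_between v tr)); [case: (cbd v t) | case: (hbd v t)].
Qed.

Lemma mixed_energy_between v n : (1 <= n <= T)%N ->
  between 0 (\sum_(1 <= t < n) (hpc v t - cpc v t)) (\sum_(1 <= t < n) w v t) ->
  between (ce v n) (he v n) (mixed_energy v n).
Proof.
move=> nr wn; rewrite (disagg_energyE ok check) ?(disagg_energyE ok hat) //.
rewrite /mixed_energy big_split /=; apply: between_affine => //.
by apply: between_addl; rewrite -sumrB.
Qed.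

Lemma mixed_energy_le v t : (1 <= t <= T)%N -> mixed_energy v t <= mixed_energy v T.
Proof.
move=> /andP[t1 tT]; rewrite lerD2l ler_wpM2l // (big_cat_nat t1 tT) /= lerDl.
rewrite big_nat_cond sumr_ge0 // => j /andP[/andP[tj jT] _].
by rewrite mixed_power_ge0 // (leq_trans t1 tj) ltnW.
Qed.

Lemma mixed_energy_ge v t : (1 <= t <= T)%N -> e_arr D v <= mixed_energy v t.
Proof.
move=> /andP[t1 tT]; rewrite lerDl mulr_ge0 // big_nat_cond sumr_ge0 //.
move=> j /andP[/andP[j1 jt] _].
by rewrite mixed_power_ge0 // j1 ltnW // (leq_trans jt tT).
Qed.

Lemma mixed_feasible : disagg_feasible T D eta_c dt p mixed_power mixed_energy.
Proof.
have [_ [_ [_ [_ win]]]] := ok.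
have [c_sum [c_bd [_ [c_arr [c_dep [c_bd' _]]]]]] := check.
have [_ [h_bd [_ [_ [h_dep [h_bd' _]]]]]] := hat.
split; [|split; [|split; [|split; [|split; [|split]]]]].
- move=> t tr; rewrite big_split /= w_sum // -c_sum //.
  by rewrite addrC subrK.
- move=> v t tr tw; have [c0 cmax] := c_bd v t tr tw; have [h0 hmax] := h_bd v t tr tw.
  split; [apply: (between_ge c0 h0) | apply: (between_le cmax hmax)];
    exact: mixed_power_between.
- by move=> v t t1 tT; rewrite /mixed_energy big_nat_recr //=; ring.
- move=> v; rewrite /mixed_energy big_nat_cond big1 ?mulr0 ?addr0 //.
  move=> j /andP[/andP[j1 jta] _].
  have [_ [tatd tdT]] := win v.
  have jT : (j <= T)%N by rewrite (leq_trans (ltnW jta)) ?(leq_trans tatd).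
  by rewrite mixed_power_off ?j1 ?jT // leqNgt jta.
- move=> v; have [ta1 [tatd tdT]] := win v.
  have tdr : (1 <= t_dep D v <= T)%N by rewrite (leq_trans ta1 tatd).
  exact: between_ge (c_dep v) (h_dep v) (mixed_energy_between tdr (w_departure v)).
- move=> v t tr; have [ta1 [tatd tdT]] := win v.
  have taT : (1 <= t_arr D v <= T)%N by rewrite ta1 (leq_trans tatd tdT).
  have T1 : (1 <= T <= T)%N by rewrite leqnn (leq_trans ta1 (leq_trans tatd tdT)).
  split.
    by have [+ _] := c_bd' v _ taT; rewrite c_arr => /le_trans->; rewrite ?mixed_energy_ge.
  apply: le_trans (mixed_energy_le v tr) _.
  have [_ cmax] := c_bd' v _ T1; have [_ hmax] := h_bd' v _ T1.
  exact: between_le cmax hmax (mixed_energy_between T1 (w_horizon v)).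
- exact: mixed_power_off.
Qed.

End Mixing.

Theorem proposition1 (R : realFieldType) (V : finType) (T : nat)
    (D : EVdata R V) (eta_c dt : R) (phat pcheck : nat -> R) :
  EVdata_ok T D eta_c dt ->
  in_Fc T D eta_c dt phat pcheck ->
  forall p : nat -> R,
    (forall t, (1 <= t <= T)%N -> pcheck t <= p t /\ p t <= phat t) ->
    exists (pc e : V -> nat -> R), disagg_feasible T D eta_c dt p pc e.
Proof.
move=> ok [[hpc [he hat]] [[cpc [ce check]] _]] p p_bd.
have td_le_T v : (t_dep D v <= T)%N.
  by have [_ [_ [_ [_ win]]]] := ok; have [_ []] := win v.
have a_bd t : (1 <= t <= T)%N -> 0 <= p t - pcheck t <= \sum_v (hpc v t - cpc v t).
  move=> tr; have [lo hi] := p_bd t tr; have [h_sum _] := hat; have [c_sum _] := check.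
  by rewrite sumrB -h_sum // -c_sum // subr_ge0 lo lerD2r hi.
have [w [w_sum w_slot w_dep w_hor]] := balanced_split td_le_T a_bd.
exists (mixed_power cpc w), (mixed_energy D eta_c dt cpc w).
exact: mixed_feasible ok hat check w_sum w_slot w_dep w_hor.
Qed.
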